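(* Let $T:\mathcal L_n\rightrightarrows\mathcal L_n$ be defined by $z\in T(y)\iff P_{\mathcal N}(z)+P_{\mathcal M}(y)\in(\mathcal F+N_{\mathcal C})(P_{\mathcal N}(y)+P_{\mathcal M}(z))$, and let $A:\mathcal L_n\to\mathcal L_n$ be the symmetric positive definite invertible linear map $A(u)=P_{\mathcal N}(u)+rP_{\mathcal M}(u)$. Then the iterations of the IPHA are equivalent to those of the HIPPM applied to the operator $ATA$ with $\varepsilon_k=0$ and $c_k=r^{-1}$ for all $k$ (with the same choices of $\sigma_k$ and $\tau_k$), under the identification $z_k=x_k-r^{-1}w_k$ (equivalently $x_k=P_{\mathcal N}(z_k)$, $w_k=-rP_{\mathcal M}(z_k)$): an IPHA step from $(x_k,w_k)$ corresponds to an HIPPM step from $z_k$, the two stopping tests coincide, and the HIPPM update equals $z_{k+1}=x_{k+1}-r^{-1}w_{k+1}$.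
   Context: Multistage setting: $\Xi$ is a finite set of scenarios $\xi=(\xi_1,\dots,\xi_N)$ with probabilities $p(\xi)>0$; $n=n_1+\dots+n_N$. $\mathcal L_n$ is the space of functions $x:\Xi\to\mathbb R^n$, $x(\xi)=(x_1(\xi),\dots,x_N(\xi))$, $x_j(\xi)\in\mathbb R^{n_j}$, with inner product $\langle x,w\rangle=\sum_{\xi}p(\xi)\sum_{j}\langle x_j(\xi),w_j(\xi)\rangle$. $\mathcal N=\{x\in\mathcal L_n: x_j(\xi)\text{ does not depend on }\xi_j,\dots,\xi_N\}$, $\mathcal M=\mathcal N^\perp$, with orthogonal projections $P_{\mathcal N},P_{\mathcal M}$. For each $\xi$, $C(\xi)\subset\mathbb R^n$ is nonempty closed convex and $F(\cdot,\xi):\mathbb R^n\to\mathbb R^n$ is continuous monotone; $\mathcal C=\{x\in\mathcal L_n: x(\xi)\in C(\xi)\ \forall\xi\}$ and $\mathcal F(x)(\xi)=F(x(\xi),\xi)$. $r>0$ fixed. IPHA: choose $x_0\in\mathcal N$, $w_0\in\mathcal M$, $\bar\sigma\in(0,1)$, $\theta\in(0,1)$. At iteration $k$: choose $\sigma_k\in[0,\bar\sigma)$, find $\hat x^k,\hat w^k\in\mathcal L_n$ with $r(x_k(\xi)-\hat x^k(\xi))-w_k(\xi)\in F(\hat w^k(\xi),\xi)+N_{C(\xi)}(\hat w^k(\xi))$ for all $\xi$, $\delta^k=\hat w^k-\hat x^k$, and $\|\delta^k\|^2\le\sigma_k^2(\|a_k\|^2+\|b_k\|^2)$, where $a_k=x_k-P_{\mathcal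 N}(\hat x^k)+P_{\mathcal M}(\hat w^k)$, $b_k=x_k-P_{\mathcal N}(\hat w^k)+P_{\mathcal M}(\hat x^k)$. If $b_k=0$ stop; otherwise choose $\tau_k\in[1-\theta,1+\theta]$, set $\alpha_k=\langle a_k,b_k\rangle/\|a_k\|^2$, $x_{k+1}=x_k-\tau_k\alpha_k(x_k-P_{\mathcal N}(\hat x^k))$, $w_{k+1}=w_k+\tau_k\alpha_k rP_{\mathcal M}(\hat w^k)$. HIPPM (hybrid inexact proximal point method) for a maximal monotone operator $S$ on a Hilbert space, here with $\varepsilon_k=0$ and constant $c_k=c>0$: from $z_k$, choose $\sigma_k\in[0,\bar\sigma)$ and find $\hat z^k,\hat v^k$ with $\hat v^k\in S(\hat z^k)$, $\delta^k=c\hat v^k+\hat z^k-z_k$, $\|\delta^k\|^2\le\sigma_k^2(\|c\hat v^k\|^2+\|\hat z^k-z_k\|^2)$. Stop if $z_k=\hat z^k$; otherwise choose $\tau_k\in[1-\theta,1+\theta]$ and set $z_{k+1}=z_k-\tau_k a_k\hat v^k$ with $a_k=\langle\hat v^k,z_k-\hat z^k\rangle/\|\hat v^k\|^2$. *)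

From HB Require Import structures.
From mathcomp Require Import all_boot all_order all_algebra.
From mathcomp Require Import all_classical all_reals all_analysis.
From mathcomp Require Import matrix_topology matrix_normedtype.
Import Order.TTheory GRing.Theory Num.Theory numFieldNormedType.Exports.

Set Implicit Arguments.
Unset Strict Implicit.
Unset Printing Implicit Defensive.

Local Open Scope ring_scope.
Local Open Scope classical_set_scope.

(* Vectors of R^n are row vectors 'rV[R]_n; an element of L_n is a function
   S -> 'rV[R]_n, where S : finType is the (finite) scenario set Xi. *)

Section Defs.
Context {R : realType}.

Definition dotv {n : nat} (u v : 'rV[R]_n) : R := (u *m v^T) 0 0.

Definition normal_cone {V : zmodType} (ip : V -> V -> R) (K : set V) (u : V)
  : set V := [set v | K u /\ forall y, K y -> ip v (y - u) <= 0].

Context {S : finType} {n : nat}.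

Definition ipL (p : S -> R) (x w : S -> 'rV[R]_n) : R :=
  \sum_(s : S) p s * dotv (x s) (w s).

Definition sqnormL (p : S -> R) (x : S -> 'rV[R]_n) : R := ipL p x x.

(* Scenario s has components coord s l
   (l : 'I_N, 0-based), coordinate i of R^n belongs to stage (stage i)
   (0-based); x_j(xi) does not depend on xi_j, ..., xi_N, i.e. it is
   determined by the components with index < stage i. *)
Definition nonanticip {N : nat} {E : eqType} (coord : S -> 'I_N -> E)
  (stage : 'I_n -> 'I_N) : set (S -> 'rV[R]_n) :=
  [set x | forall (i : 'I_n) (s s' : S),
     (forall l : 'I_N, (l < stage i)%N -> coord s l = coord s' l) ->
     x s 0 i = x s' 0 i].

Definition orthL (p : S -> R) (V : set (S -> 'rV[R]_n)) : set (S -> 'rV[R]_n) :=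
  [set w | forall y, V y -> ipL p w y = 0].

Definition is_orth_proj (p : S -> R) (V : set (S -> 'rV[R]_n))
  (P : (S -> 'rV[R]_n) -> (S -> 'rV[R]_n)) : Prop :=
  forall x, V (P x) /\ forall y, V y -> ipL p (x - P x) y = 0.

Definition Cset (C : S -> set 'rV[R]_n) : set (S -> 'rV[R]_n) :=
  [set x | forall s, C s (x s)].

Definition Fcal (F : 'rV[R]_n -> S -> 'rV[R]_n) (x : S -> 'rV[R]_n)
  : S -> 'rV[R]_n := fun s => F (x s) s.

Definition FplusNC (p : S -> R) (F : 'rV[R]_n -> S -> 'rV[R]_n)
  (C : S -> set 'rV[R]_n) (u : S -> 'rV[R]_n) : set (S -> 'rV[R]_n) :=
  [set v | normal_cone (ipL p) (Cset C) u (v - Fcal F u)].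

Notation Lop := ((S -> 'rV[R]_n) -> (S -> 'rV[R]_n)).

Definition T_op (PN PM : Lop) (G : (S -> 'rV[R]_n) -> set (S -> 'rV[R]_n))
  (y : S -> 'rV[R]_n) : set (S -> 'rV[R]_n) :=
  [set z | G (PN y + PM z) (PN z + PM y)].

Definition A_op (PN PM : Lop) (r : R) (u : S -> 'rV[R]_n) : S -> 'rV[R]_n :=
  PN u + r *: PM u.

Definition ATA_op (A : Lop) (T : (S -> 'rV[R]_n) -> set (S -> 'rV[R]_n))
  (y : S -> 'rV[R]_n) : set (S -> 'rV[R]_n) := A @` T (A y).

Definition ipha_a (PN PM : Lop) (x xh wh : S -> 'rV[R]_n) := x - PN xh + PM wh.
Definition ipha_b (PN PM : Lop) (x xh wh : S -> 'rV[R]_n) := x - PN wh + PM xh.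

Definition ipha_step_ok (p : S -> R) (F : 'rV[R]_n -> S -> 'rV[R]_n)
  (C : S -> set 'rV[R]_n) (PN PM : Lop) (r sigbar : R)
  (x w : S -> 'rV[R]_n) (sig : R) (xh wh : S -> 'rV[R]_n) : Prop :=
  [/\ 0 <= sig < sigbar,
      (forall s, normal_cone dotv (C s) (wh s)
                   (r *: (x s - xh s) - w s - F (wh s) s)) &
      sqnormL p (wh - xh) <=
        sig ^+ 2 * (sqnormL p (ipha_a PN PM x xh wh) +
                    sqnormL p (ipha_b PN PM x xh wh))].

Definition ipha_alpha (p : S -> R) (PN PM : Lop) (x xh wh : S -> 'rV[R]_n) : R :=
  ipL p (ipha_a PN PM x xh wh) (ipha_b PN PM x xh wh) /
  sqnormL p (ipha_a PN PM x xh wh).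

Definition ipha_next (p : S -> R) (PN PM : Lop) (r : R)
  (x w : S -> 'rV[R]_n) (tau : R) (xh wh : S -> 'rV[R]_n)
  : (S -> 'rV[R]_n) * (S -> 'rV[R]_n) :=
  let al := ipha_alpha p PN PM x xh wh in
  (x - (tau * al) *: (x - PN xh), w + (tau * al * r) *: PM wh).

Definition hippm_step_ok (p : S -> R)
  (Sop : (S -> 'rV[R]_n) -> set (S -> 'rV[R]_n)) (c sigbar : R)
  (z : S -> 'rV[R]_n) (sig : R) (zh vh : S -> 'rV[R]_n) : Prop :=
  [/\ 0 <= sig < sigbar, Sop zh vh &
      sqnormL p (c *: vh + zh - z) <=
        sig ^+ 2 * (sqnormL p (c *: vh) + sqnormL p (zh - z))].

Definition hippm_next (p : S -> R) (z : S -> 'rV[R]_n) (tau : R)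
  (zh vh : S -> 'rV[R]_n) : S -> 'rV[R]_n :=
  z - (tau * (ipL p vh (z - zh) / sqnormL p vh)) *: vh.

End Defs.

From HB Require Import structures.
From mathcomp Require Import all_boot all_order all_algebra.
From mathcomp Require Import all_classical all_reals all_analysis.
From mathcomp Require Import matrix_topology matrix_normedtype.
From mathcomp Require Import ring.
Import Order.TTheory GRing.Theory Num.Theory numFieldNormedType.Exports.

Set Implicit Arguments.
Unset Strict Implicit.
Unset Printing Implicit Defensive.

Local Open Scope ring_scope.
Local Open Scope classical_set_scope.

(* With z = x - r^-1 w for x in N and w in M, the projections recover
   x = PN z and w = -r PM z.  An IPHA step (xh, wh) and an HIPPM step
   (zh, vh = A u) for ATA are matched by
     wh = PN (A zh) + PM u,   r (x - xh) - w = PN u + PM (A zh),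
   which turns the inclusion defining (xh, wh) into u \in T (A zh).  Under
   this matching vh = r a_k and z - zh = b_k, hence r^-1 vh + zh - z = wh - xh,
   the stopping tests agree, and <vh, z - zh> / |vh|^2 = alpha_k / r, so both
   updates move z by tau_k alpha_k a_k. *)

Section InnerProduct.
Variables (R : realType) (n : nat).
Implicit Types u v : 'rV[R]_n.

Lemma dotvE u v : dotv u v = \sum_j u 0 j * v 0 j.
Proof. by rewrite /dotv mxE; apply: eq_bigr => j _; rewrite mxE. Qed.

Lemma dotvC u v : dotv u v = dotv v u.
Proof. by rewrite !dotvE; apply: eq_bigr => j _; rewrite mulrC. Qed.

Lemma dotvDl u1 u2 v : dotv (u1 + u2) v = dotv u1 v + dotv u2 v.
Proof. by rewrite /dotv mulmxDl mxE. Qed.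

Lemma dotvZl (k : R) u v : dotv (k *: u) v = k * dotv u v.
Proof. by rewrite /dotv -scalemxAl mxE. Qed.

Lemma dotv0r u : dotv u 0 = 0.
Proof. by rewrite /dotv trmx0 mulmx0 mxE. Qed.

Lemma dotv_ge0 u : 0 <= dotv u u.
Proof. by rewrite dotvE; apply: sumr_ge0 => j _; rewrite -expr2 sqr_ge0. Qed.

Lemma dotv_eq0 u : dotv u u = 0 -> u = 0.
Proof.
rewrite dotvE => uu0; apply/rowP => j; rewrite mxE.
have /eqP : u 0 j * u 0 j = 0.
  by apply: (psumr_eq0P _ uu0) => // i _; rewrite -expr2 sqr_ge0.
by rewrite mulf_eq0 orbb => /eqP.
Qed.

Variables (S : finType) (p : S -> R).
Implicit Types x y w : S -> 'rV[R]_n.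

Lemma ipLC x w : ipL p x w = ipL p w x.
Proof. by apply: eq_bigr => s _; rewrite dotvC. Qed.

Lemma ipLDl x y w : ipL p (x + y) w = ipL p x w + ipL p y w.
Proof. by rewrite -big_split; apply: eq_bigr => s _; rewrite dotvDl mulrDr. Qed.

Lemma ipLZl (k : R) x w : ipL p (k *: x) w = k * ipL p x w.
Proof.
by rewrite mulr_sumr; apply: eq_bigr => s _; rewrite dotvZl mulrCA.
Qed.

Lemma ipLNl x w : ipL p (- x) w = - ipL p x w.
Proof. by rewrite -scaleN1r ipLZl mulN1r. Qed.

Lemma ipLBl x y w : ipL p (x - y) w = ipL p x w - ipL p y w.
Proof. by rewrite ipLDl ipLNl. Qed.

Lemma ipLZr (k : R) x w : ipL p x (k *: w) = k * ipL p x w.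
Proof. by rewrite ipLC ipLZl ipLC. Qed.

Lemma sqnormLN x : sqnormL p (- x) = sqnormL p x.
Proof. by rewrite /sqnormL ipLNl ipLC ipLNl opprK. Qed.

Lemma ipL_div_sqnormLZ (k : R) x y : k != 0 ->
  ipL p (k *: x) y / sqnormL p (k *: x) = k^-1 * (ipL p x y / sqnormL p x).
Proof.
move=> k0; rewrite /sqnormL !ipLZl ipLZr !invfM.
by rewrite -mulrA mulrCA mulVKf // mulrCA.
Qed.

Lemma orthLD (X : set (S -> 'rV[R]_n)) x y :
  orthL p X x -> orthL p X y -> orthL p X (x + y).
Proof. by move=> Xx Xy z Xz; rewrite ipLDl Xx // Xy // addr0. Qed.

Lemma orthLZ (X : set (S -> 'rV[R]_n)) (k : R) x :
  orthL p X x -> orthL p X (k *: x).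
Proof. by move=> Xx z Xz; rewrite ipLZl Xx // mulr0. Qed.

Lemma orthLN (X : set (S -> 'rV[R]_n)) x : orthL p X x -> orthL p X (- x).
Proof. by rewrite -scaleN1r; apply: orthLZ. Qed.

Hypothesis p_pos : forall s, 0 < p s.

Lemma sqnormL_eq0 x : sqnormL p x = 0 -> x = 0.
Proof.
move=> xx0; apply/funext => s.
have /eqP : p s * dotv (x s) (x s) = 0.
  by apply: (psumr_eq0P _ xx0) => // t _; rewrite mulr_ge0 ?dotv_ge0 ?ltW.
by rewrite mulf_eq0 gt_eqF //= => /eqP /dotv_eq0.
Qed.

Lemma normal_cone_CsetE (C : S -> set 'rV[R]_n) (u v : S -> 'rV[R]_n) :
  normal_cone (ipL p) (Cset C) u v <->
  forall s, normal_cone dotv (C s) (u s) (v s).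
Proof.
split=> [[Cu uv] s | uv]; last first.
  split=> [s | y Cy]; first by case: (uv s).
  apply: sumr_le0 => s _; apply: mulr_ge0_le0; first exact: ltW.
  exact: (uv s).2.
split=> [|y Cy]; first exact: Cu.
pose y' t := if t == s then y else u t.
have Cy' : Cset C y' by move=> t; rewrite /y'; case: eqP => [->|].
have := uv y' Cy'; rewrite /ipL (bigD1 s) //= big1 ?addr0.
  by rewrite /y' !fctE eqxx pmulr_rle0.
by move=> t /negbTE ts; rewrite /y' !fctE ts subrr dotv0r mulr0.
Qed.

End InnerProduct.

Ltac coordwise := apply/funext => ?; apply/rowP => ?; rewrite ?fctE !mxE.

Lemma nonanticipD (R : realType) (S : finType) (m : nat) (E : eqType)
    (n : nat) (coord : S -> 'I_m -> E) (stage : 'I_n -> 'I_m)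
    (x y : S -> 'rV[R]_n) :
  nonanticip coord stage x -> nonanticip coord stage y ->
  nonanticip coord stage (x + y).
Proof.
by move=> Nx Ny i s s' ss'; rewrite !fctE !mxE (Nx i s s') ?(Ny i s s').
Qed.

Lemma nonanticipZ (R : realType) (S : finType) (m : nat) (E : eqType)
    (n : nat) (coord : S -> 'I_m -> E) (stage : 'I_n -> 'I_m)
    (k : R) (x : S -> 'rV[R]_n) :
  nonanticip coord stage x -> nonanticip coord stage (k *: x).
Proof. by move=> Nx i s s' ss'; rewrite !fctE !mxE (Nx i s s'). Qed.

Section OrthogonalDecomposition.
Variables (R : realType) (S : finType) (n : nat) (p : S -> R).
Hypothesis p_pos : forall s, 0 < p s.
Local Notation L := (S -> 'rV[R]_n).

Lemma orth_proj_eq (V : set L) (P : L -> L) x u :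
  (forall a b, V a -> V b -> V (a - b)) -> is_orth_proj p V P ->
  V u -> (forall y, V y -> ipL p (x - u) y = 0) -> P x = u.
Proof.
move=> VB /(_ x) [VPx xPx] Vu xu; apply/subr0_eq/(sqnormL_eq0 p_pos).
have E : P x - u = (x - u) - (x - P x) by rewrite [RHS]addrC opprB addrA subrK.
by rewrite /sqnormL {1}E ipLBl xu ?xPx ?subrr //; apply: VB.
Qed.

Variable N : set L.
Hypotheses (N_add : forall a b, N a -> N b -> N (a + b))
           (N_scale : forall (k : R) a, N a -> N (k *: a)).
Local Notation M := (orthL p N).

Lemma N_sub a b : N a -> N b -> N (a - b).
Proof. by move=> Na Nb; rewrite -scaleN1r; apply/N_add/N_scale. Qed.

Lemma M_sub a b : M a -> M b -> M (a - b).
Proof. by move=> Ma Mb; apply/orthLD/orthLN. Qed.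

Variables PN PM : L -> L.
Hypotheses (PN_proj : is_orth_proj p N PN) (PM_proj : is_orth_proj p M PM).

Lemma PN_mem v : N (PN v). Proof. by case: (PN_proj v). Qed.

Lemma PM_mem v : M (PM v). Proof. by case: (PM_proj v). Qed.

Lemma PN_addM m k : N m -> M k -> PN (m + k) = m.
Proof.
move=> Nm Mk; apply: orth_proj_eq N_sub PN_proj Nm _ => y Ny.
by rewrite addrC addKr; apply: Mk.
Qed.

Lemma PM_addN m k : N m -> M k -> PM (m + k) = k.
Proof.
move=> Nm Mk; apply: orth_proj_eq M_sub PM_proj Mk _ => y My.
by rewrite addrK ipLC; apply: My.
Qed.

Lemma PN_add_PM v : PN v + PM v = v.
Proof.
have Mv : M (v - PN v) by case: (PN_proj v).
have E : v = PN v + (v - PN v) by rewrite addrC subrK.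
by rewrite {2}E (PM_addN (PN_mem v) Mv) -E.
Qed.

Section Correspondence.
Variables (F : 'rV[R]_n -> S -> 'rV[R]_n) (C : S -> set 'rV[R]_n) (r : R).
Hypothesis r0 : r != 0.
Variables x w : L.
Hypotheses (Nx : N x) (Mw : M w).

Local Notation A := (A_op PN PM r).
Local Notation T := (T_op PN PM (FplusNC p F C)).
Local Notation z := (x - r^-1 *: w).
Local Notation a := (ipha_a PN PM x).
Local Notation b := (ipha_b PN PM x).

Lemma proj_identification : PN z = x /\ - r *: PM z = w.
Proof.
have Mw' : M (- (r^-1 *: w)) by apply/orthLN/orthLZ.
rewrite (PN_addM Nx Mw') (PM_addN Nx Mw'); split=> //.
by rewrite scalerN scaleNr opprK scalerA mulfV // scale1r.
Qed.

Lemma PN_A v : PN (A v) = PN v.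
Proof. by rewrite (PN_addM (PN_mem _)) //; apply/orthLZ/PM_mem. Qed.

Lemma PM_A v : PM (A v) = r *: PM v.
Proof. by rewrite (PM_addN (PN_mem _)) //; apply/orthLZ/PM_mem. Qed.

(* [r *: (x - xh) - w = PN u + PM (A zh)], solved for [xh]. *)
Definition linked xh wh zh u : Prop :=
  wh = PN (A zh) + PM u /\ xh = (x - r^-1 *: PN u) - r^-1 *: (PM (A zh) + w).

Lemma linked_proj xh wh zh u : linked xh wh zh u ->
  [/\ PN wh = PN zh, PM wh = PM u, PN xh = x - r^-1 *: PN u
    & PM xh = - (r^-1 *: (r *: PM zh + w))].
Proof.
move=> [-> ->].
have Nxh : N (x - r^-1 *: PN u) by apply/N_sub/N_scale/PN_mem.
have Mxh : M (- (r^-1 *: (PM (A zh) + w))).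
  by apply/orthLN/orthLZ; apply: orthLD (PM_mem _) Mw.
rewrite (PN_addM (PN_mem _) (PM_mem _)) (PM_addN (PN_mem _) (PM_mem _)).
by rewrite (PN_addM Nxh Mxh) (PM_addN Nxh Mxh) PN_A PM_A.
Qed.

Lemma linked_T xh wh zh u : linked xh wh zh u ->
  T (A zh) u <-> forall s, normal_cone dotv (C s) (wh s)
                             (r *: (x s - xh s) - w s - F (wh s) s).
Proof.
move=> [e1 e2]; rewrite /T_op /FplusNC /= -e1.
have -> : PN u + PM (A zh) = r *: (x - xh) - w by rewrite e2; coordwise; field.
exact: normal_cone_CsetE.
Qed.

Lemma linked_a xh wh zh u : linked xh wh zh u -> A u = r *: a xh wh.
Proof.
case/linked_proj=> _ PMwh PNxh _; rewrite /A_op /ipha_a PNxh PMwh.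
by coordwise; field.
Qed.

Lemma linked_b xh wh zh u : linked xh wh zh u -> z - zh = b xh wh.
Proof.
case/linked_proj=> PNwh _ _ PMxh; rewrite /ipha_b PNwh PMxh.
by rewrite -[in LHS](PN_add_PM zh); coordwise; field.
Qed.

Lemma linked_of_ipha xh wh : exists zh u, linked xh wh zh u.
Proof.
pose zh := PN wh - (PM xh + r^-1 *: w); pose u := r *: (x - PN xh) + PM wh.
have Mzh : M (- (PM xh + r^-1 *: w)).
  by apply/orthLN/orthLD; [apply: PM_mem | apply: orthLZ].
have Nu : N (r *: (x - PN xh)) by apply/N_scale/N_sub/PN_mem.
exists zh, u; split.
  by rewrite PN_A (PN_addM (PN_mem _) Mzh) (PM_addN Nu (PM_mem _)) PN_add_PM.
rewrite (PN_addM Nu (PM_mem _)) PM_A (PM_addN (PN_mem _) Mzh).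
by rewrite -[in LHS](PN_add_PM xh); coordwise; field.
Qed.

Section Agreement.
Variables xh wh zh vh : L.
Hypotheses (vhE : vh = r *: a xh wh) (zhE : z - zh = b xh wh).

Lemma residual_agree : r^-1 *: vh + zh - z = wh - xh.
Proof.
have -> : r^-1 *: vh + zh - z = a xh wh - (z - zh).
  by rewrite vhE; coordwise; field.
rewrite zhE /ipha_a /ipha_b -[in RHS](PN_add_PM wh) -[in RHS](PN_add_PM xh).
by coordwise; ring.
Qed.

Lemma stop_agree : b xh wh = 0 <-> z = zh.
Proof. by rewrite -zhE; split=> [/subr0_eq | ->]; last exact: subrr. Qed.

Lemma update_agree tau :
  let xw' := ipha_next p PN PM r x w tau xh wh in
  [/\ N xw'.1, M xw'.2 & hippm_next p z tau zh vh = xw'.1 - r^-1 *: xw'.2].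
Proof.
split; first by apply/N_sub/N_scale/N_sub/PN_mem.
  by apply: orthLD Mw _; apply/orthLZ/PM_mem.
rewrite /hippm_next /ipha_next /= zhE vhE ipL_div_sqnormLZ //.
rewrite -/(ipha_alpha p PN PM x xh wh); set al := ipha_alpha _ _ _ _ _ _.
by rewrite /ipha_a; coordwise; field.
Qed.

Lemma sqnorm_agree :
  [/\ sqnormL p (r^-1 *: vh + zh - z) = sqnormL p (wh - xh),
      sqnormL p (r^-1 *: vh) = sqnormL p (a xh wh)
    & sqnormL p (zh - z) = sqnormL p (b xh wh)].
Proof.
split; first by rewrite residual_agree.
  by rewrite vhE scalerA mulVf // scale1r.
by rewrite -sqnormLN opprB zhE.
Qed.

End Agreement.

Lemma ipha_to_hippm sigbar sig xh wh :
  ipha_step_ok p F C PN PM r sigbar x w sig xh wh ->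
  exists zh vh,
    [/\ hippm_step_ok p (ATA_op A T) r^-1 sigbar z sig zh vh,
        b xh wh = 0 <-> z = zh &
        forall tau, let xw' := ipha_next p PN PM r x w tau xh wh in
          [/\ N xw'.1, M xw'.2
            & hippm_next p z tau zh vh = xw'.1 - r^-1 *: xw'.2]].
Proof.
move=> [sig_ok nc sq_ok]; have [zh [u lk]] := linked_of_ipha xh wh.
have vhE := linked_a lk; have zhE := linked_b lk.
have [sq1 sq2 sq3] := sqnorm_agree vhE zhE.
exists zh, (A u).
split; [split=> // | exact: stop_agree zhE | exact: update_agree].
  by exists u => //; apply/(linked_T lk).
by rewrite sq1 sq2 sq3.
Qed.

Lemma hippm_to_ipha sigbar sig zh vh :
  hippm_step_ok p (ATA_op A T) r^-1 sigbar z sig zh vh ->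
  exists xh wh,
    [/\ ipha_step_ok p F C PN PM r sigbar x w sig xh wh,
        b xh wh = 0 <-> z = zh &
        forall tau, let xw' := ipha_next p PN PM r x w tau xh wh in
          [/\ N xw'.1, M xw'.2
            & hippm_next p z tau zh vh = xw'.1 - r^-1 *: xw'.2]].
Proof.
move=> [sig_ok [u Tu <-] sq_ok].
pose wh := PN (A zh) + PM u.
pose xh := (x - r^-1 *: PN u) - r^-1 *: (PM (A zh) + w).
have lk : linked xh wh zh u by [].
have vhE := linked_a lk; have zhE := linked_b lk.
have [sq1 sq2 sq3] := sqnorm_agree vhE zhE.
exists xh, wh.
split; [split=> // | exact: stop_agree zhE | exact: update_agree].
  exact/(linked_T lk).
by rewrite -sq1 -sq2 -sq3.
Qed.

End Correspondence.

End OrthogonalDecomposition.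

Theorem theorem2
  (R : realType) (S : finType) (NN : nat) (E : eqType)
  (coord : S -> 'I_NN -> E) (coord_inj : injective coord)
  (n : nat) (stage : 'I_n -> 'I_NN)
  (stage_mono : forall i j : 'I_n, (i <= j)%N -> (stage i <= stage j)%N)
  (p : S -> R) (p_pos : forall s, 0 < p s) (p_sum : \sum_(s : S) p s = 1)
  (C : S -> set 'rV[R]_n)
  (C_ne : forall s, C s !=set0) (C_closed : forall s, closed (C s))
  (C_convex : forall s, convex_set (C s : set (convex_lmodType 'rV[R]_n)))
  (F : 'rV[R]_n -> S -> 'rV[R]_n)
  (F_cont : forall s, continuous (F^~ s))
  (F_mono : forall s u v, 0 <= dotv (F u s - F v s) (u - v))
  (r : R) (r_pos : 0 < r)
  (PN PM : (S -> 'rV[R]_n) -> (S -> 'rV[R]_n))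
  (PN_proj : is_orth_proj p (nonanticip coord stage) PN)
  (PM_proj : is_orth_proj p (orthL p (nonanticip coord stage)) PM)
  (sigbar theta : R) (sigbar01 : 0 < sigbar < 1) (theta01 : 0 < theta < 1) :
  let Nset := nonanticip coord stage in
  let Mset := orthL p Nset in
  let Top := T_op PN PM (FplusNC p F C) in
  let Aop := A_op PN PM r in
  let Sop := ATA_op Aop Top in
  [/\ (* identification z = x - r^-1 w  <->  x = P_N z, w = -r P_M z *)
      (forall x w, Nset x -> Mset w ->
         PN (x - r^-1 *: w) = x /\ - r *: PM (x - r^-1 *: w) = w),
      (* an IPHA step yields an HIPPM step for S = ATA, c = r^-1 *)
      (forall x w sig xh wh, Nset x -> Mset w ->
         ipha_step_ok p F C PN PM r sigbar x w sig xh wh ->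
         exists zh vh,
           [/\ hippm_step_ok p Sop r^-1 sigbar (x - r^-1 *: w) sig zh vh,
               (ipha_b PN PM x xh wh = 0 <-> x - r^-1 *: w = zh) &
               forall tau, 1 - theta <= tau <= 1 + theta ->
                 ipha_b PN PM x xh wh <> 0 ->
                 let xw' := ipha_next p PN PM r x w tau xh wh in
                 [/\ Nset xw'.1, Mset xw'.2 &
                     hippm_next p (x - r^-1 *: w) tau zh vh
                       = xw'.1 - r^-1 *: xw'.2]]) &
      (* and conversely an HIPPM step yields an IPHA step *)
      (forall x w sig zh vh, Nset x -> Mset w ->
         hippm_step_ok p Sop r^-1 sigbar (x - r^-1 *: w) sig zh vh ->
         exists xh wh,
           [/\ ipha_step_ok p F C PN PM r sigbar x w sig xh wh,
               (ipha_b PN PM x xh wh = 0 <-> x - r^-1 *: w = zh) &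
               forall tau, 1 - theta <= tau <= 1 + theta ->
                 ipha_b PN PM x xh wh <> 0 ->
                 let xw' := ipha_next p PN PM r x w tau xh wh in
                 [/\ Nset xw'.1, Mset xw'.2 &
                     hippm_next p (x - r^-1 *: w) tau zh vh
                       = xw'.1 - r^-1 *: xw'.2]])].
Proof.
move=> Nset Mset Top Aop Sop.
have r0 : r != 0 by rewrite gt_eqF.
have N_add := @nonanticipD R S NN E n coord stage.
have N_scale := @nonanticipZ R S NN E n coord stage.
split=> [x w Nx Mw | x w sig xh wh Nx Mw | x w sig zh vh Nx Mw].
- exact: (proj_identification p_pos N_add N_scale PN_proj PM_proj r0 Nx Mw).
- move/(ipha_to_hippm p_pos N_add N_scale PN_proj PM_proj r0 Nx Mw).
  move=> [zh [vh [ok stop upd]]].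
  by exists zh, vh; split=> // tau _ _; apply: upd.
- move/(hippm_to_ipha p_pos N_add N_scale PN_proj PM_proj r0 Nx Mw).
  move=> [xh [wh [ok stop upd]]].
  by exists xh, wh; split=> // tau _ _; apply: upd.
Qed.
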